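(* Let $C$ be a compact Hausdorff space, and let $X$ be a topological space which is written in two ways as a topological coproduct $X=\bigsqcup_{i\in\mathbb{N}}C_i=\bigsqcup_{i\in\mathbb{N}}C'_i$ where for each $i$ there are homeomorphisms $\eta_i:C\to C_i$ and $\eta'_i:C\to C'_i$. Let $\pi,\pi':X\to\mathbb{N}$ be given by $\pi(C_i)=\{i\}$ and $\pi'(C'_i)=\{i\}$, and let $\varepsilon=\{e:\exists f\in\zeta,\ e\subseteq(\pi\times\pi)^{-1}(f)\}$ and $\varepsilon'=\{e:\exists f\in\zeta,\ e\subseteq(\pi'\times\pi')^{-1}(f)\}$, where $\zeta=\{f\subseteq\mathbb{N}\times\mathbb{N}: f\setminus\Delta\mathbb{N}\text{ finite}\}$. Let $Z$ be a compact metrizable space. If $X+_fZ\in\mathrm{Pers}(\varepsilon)$ and $X+_gZ\in\mathrm{Pers}(\varepsilon')$, then $X+_fZ$ and $X+_gZ$ are homeomorphic.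
   Context: Artin–Wraith glueing: $\mathrm{Closed}(A)$ is the set of closed subsets of $A$; $f:\mathrm{Closed}(A)\to\mathrm{Closed}(B)$ is admissible if $f(\emptyset)=\emptyset$ and $f$ preserves finite unions; $A+_fB$ is $A\sqcup B$ with closed sets the $D$ with $D\cap A$ closed in $A$, $D\cap B$ closed in $B$, $f(D\cap A)\subseteq D$. $\mathrm{Comp}(X)$: compact spaces $X+_fW$ with $W$ compact Hausdorff, morphisms continuous maps that are the identity on $X$. For a Hausdorff compactification $X+_fW$ of $X$ ($X$ dense), $e\subseteq X\times X$ is perspective if $\mathrm{Cl}_{(X+_fW)^2}(e)\cap((X+_fW)^2-X^2)\subseteq\{(p,p):p\in W\}$; $\varepsilon_f$ is the set of perspective sets; for a coarse structure $\varepsilon$, the compactification is perspective if $\varepsilon\subseteq\varepsilon_f$; $\mathrm{Pers}(\varepsilon)$ is the full subcategory of $\mathrm{Comp}(X)$ of perspective compactifications. The homeomorphism in the conclusion need not be the identity on $X$. *)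

From HB Require Import structures.
From mathcomp Require Import all_boot all_order all_algebra.
From mathcomp Require Import all_classical all_reals all_analysis.
Set Implicit Arguments. Unset Strict Implicit. Unset Printing Implicit Defensive.
Import Order.TTheory GRing.Theory Num.Theory.
Local Open Scope classical_set_scope.

(* Admissible maps Closed(A) -> Closed(B): represented as total maps on sets,
   of which only the values on closed sets matter. *)
Record admissible (A B : topologicalType) := Admissible {
  adm_map :> set A -> set B;
  adm_closed : forall D, closed D -> closed (adm_map D);
  adm_set0 : adm_map set0 = set0;
  adm_setU : forall D E, closed D -> closed E ->
    adm_map (D `|` E) = adm_map D `|` adm_map E }.

Definition awglue (X W : topologicalType) (f : admissible X W) : Type :=
  (X + W)%type.

Section Glue.
Context (X W : topologicalType) (f : admissible X W).

Definition glue_closed (D : set (X + W)%type) :=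
  [/\ closed (inl @^-1` D), closed (inr @^-1` D) &
      f (inl @^-1` D) `<=` inr @^-1` D].

Definition glue_open (U : set (X + W)%type) := glue_closed (~` U).

Lemma adm_mono (D E : set X) : closed D -> closed E -> D `<=` E -> f D `<=` f E.
Proof.
move=> cD cE DE; have -> : E = D `|` E by rewrite setUidr.
by rewrite adm_setU //; apply: subsetUl.
Qed.

Lemma glue_opT : glue_open setT.
Proof.
rewrite /glue_open /glue_closed setCT !preimage_set0 adm_set0.
by split => //; exact: closed0.
Qed.

Lemma glue_opI : setI_closed glue_open.
Proof.
move=> A B [cA1 cA2 sA] [cB1 cB2 sB]; rewrite /glue_open /glue_closed setCI.
rewrite !preimage_setU; split; [exact: closedU|exact: closedU|].
rewrite adm_setU //; exact: setUSS.
Qed.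

Lemma glue_op_bigU (I : Type) (F : I -> set (X + W)%type) :
  (forall i, glue_open (F i)) -> glue_open (\bigcup_i F i).
Proof.
move=> hF; rewrite /glue_open /glue_closed setC_bigcup.
have c1 : closed (inl @^-1` \bigcap_i ~` F i).
  rewrite preimage_bigcap; apply: closed_bigI => i _; by case: (hF i).
split => //.
  rewrite preimage_bigcap; apply: closed_bigI => i _; by case: (hF i).
move=> z fz i _; case: (hF i) => ci _ si; apply: si.
by apply: (adm_mono c1 ci) fz => x /(_ i Logic.I).
Qed.

HB.instance Definition _ := Choice.on (awglue f).
HB.instance Definition _ := isOpenTopological.Build (awglue f)
  glue_opT glue_opI glue_op_bigU.

Definition inX (q : awglue f) := exists x : X, q = inl x.

Definition perspective (e : set (X * X)) :=
  closure ((fun p => ((inl p.1 : awglue f), (inl p.2 : awglue f))) @` e)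
    `&` ~` [set q : awglue f * awglue f | inX q.1 /\ inX q.2]
  `<=` [set q | exists w : W, q = (inr w, inr w)].

Definition hausdorff_compactification :=
  [/\ compact [set: awglue f], hausdorff_space (awglue f) & dense (range (inl : X -> awglue f))].

Definition Pers (eps : set (set (X * X))) :=
  hausdorff_compactification /\ eps `<=` perspective.

End Glue.

Definition zeta : set (set (nat * nat)) :=
  [set F | finite_set (F `\` [set p | p.1 = p.2])].

Definition eps_of (X : Type) (pi : X -> nat) : set (set (X * X)) :=
  [set e | exists2 F, zeta F & e `<=` (fun p => (pi p.1, pi p.2)) @^-1` F].

Definition coprod_decomp (C X : topologicalType) (pi : X -> nat) :=
  (forall i, open (pi @^-1` [set i])) /\
  (forall i, exists eta : C -> X,
     [/\ continuous eta, injective eta, range eta = pi @^-1` [set i] &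
         forall U, open U -> open (eta @` U)]).

Definition homeomorphic (T U : topologicalType) :=
  exists (h : T -> U) (k : U -> T),
    [/\ cancel h k, cancel k h, continuous h & continuous k].

Arguments Pers {X W} f eps.
Arguments perspective {X W} f e.
Arguments hausdorff_compactification {X W} f.

From HB Require Import structures.
From mathcomp Require Import all_boot all_order all_algebra.
From mathcomp Require Import all_classical all_reals all_analysis.
From mathcomp Require Import lra.

(* Write Y for X +_f Z and, for T a set of indices, A T := f (pi^-1 T): the part of Z in the
   closure of the fibres indexed by T.  Compactness of the fibres and of Y makes A T empty
   exactly when T is finite, and A N = Z by density.  Perspectivity of the graph of a map moving
   points into a closed set D along the fibres gives A (pi D) <= f D; with regularity of Y and
   compactness of Z this yields, for every e > 0, a colouring of N by finitely many colours
   whose classes have traces in e-balls.  These properties determine A up to a permutation of N: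
   a back-and-forth argument, matching i with j when their colour classes on the first k levels
   have nearby centres, gives a permutation sigma with A' (sigma T) = A T for the trace A' of g
   and pi'.  Moving each fibre C_i onto C'_(sigma i) through C and fixing Z is a homeomorphism;
   it is continuous because A (pi D) <= f D for closed D. *)

Unset Printing Implicit Defensive.
Import GRing.Theory Num.Theory.
Local Open Scope classical_set_scope.

Definition bounded_nat (T : set nat) := exists n, T `<=` `I_n.

Lemma bounded_natS {T T' : set nat} : T `<=` T' -> bounded_nat T' -> bounded_nat T.
Proof. by move=> TT' [n T'n]; exists n; apply: subset_trans T'n. Qed.

Lemma bounded_nat_seq (s : seq nat) : bounded_nat [set i | i \in s].
Proof. by exists (\max_(i <- s) i).+1 => i /= si; rewrite ltnS leq_bigmax_seq. Qed.

Lemma bounded_nat_image (h : nat -> nat) {T : set nat} :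
  bounded_nat T -> bounded_nat (h @` T).
Proof.
move=> [n Tn]; exists (\max_(i < n) h i).+1 => _ [i /Tn /= lti <-].
by rewrite ltnS (leq_bigmax (Ordinal lti)).
Qed.

Lemma unbounded_setT : ~ bounded_nat [set: nat].
Proof. by move=> [n /(_ n I)]; rewrite /= ltnn. Qed.

Lemma unbounded_fresh {T : set nat} (s : seq nat) :
  ~ bounded_nat T -> exists2 i, T i & i \notin s.
Proof.
move=> Tunb; apply: contrapT => fresh; apply/Tunb/(bounded_natS _ (bounded_nat_seq s)).
by move=> i Ti; apply: contrapT => /negP si; apply: fresh; exists i.
Qed.

Lemma uniq_map_in_inj {T U : eqType} {h : T -> U} {s : seq T} :
  uniq (map h s) -> {in s &, injective h}.
Proof.
elim: s => //= a s IH /andP[has us] x y.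
rewrite !inE => /predU1P[->|xs] /predU1P[->|ys] // hxy.
- by move: has; rewrite hxy map_f.
- by move: has; rewrite -hxy map_f.
- exact: IH.
Qed.

Lemma compact_finite_subcover {T : topologicalType} {I : eqType} {A : set T}
    (U : I -> set T) : compact A -> (forall i, open (U i)) ->
  A `<=` \bigcup_i U i -> exists s : seq I, forall x, A x -> exists2 i, i \in s & U i x.
Proof.
move=> cA oU cov; apply: contrapT => nofin.
pose S (s : seq I) := A `\` [set x | exists2 i, i \in s & U i x].
have SF : ProperFilter (filter_from [set: seq I] S).
  apply: filter_from_proper; last first.
    move=> s _; apply: contrapT => S0; apply: nofin; exists s => x Ax.
    by apply: contrapT => nx; apply: S0; exists x.
  apply: filter_from_filter; first by exists [::].
  move=> s s' _ _; exists (s ++ s') => // x [Ax nx].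
  by split; split => // -[i si Ui]; apply: nx; exists i; rewrite // mem_cat si ?orbT.
have [|x [Ax clx]] := cA _ SF; first by exists [::] => // x [].
have [i _ Uix] := cov _ Ax.
have /(clx (S [:: i])) [|y [[_ ny] Uiy]] : nbhs x (U i) by apply: open_nbhs_nbhs.
  by exists [:: i].
by apply: ny; exists i; rewrite ?mem_head.
Qed.

Lemma cancel_eventually_ge {sigma tau : nat -> nat} (N : nat) :
  cancel sigma tau -> \forall i \near \oo, (N <= sigma i)%N.
Proof.
move=> sK; have [M tauN] : bounded_nat (tau @` `I_N) by apply: bounded_nat_image; exists N.
exists M => // i /= Mi; rewrite leqNgt; apply/negP => lt.
by have := tauN i (ex_intro2 _ _ (sigma i) lt (sK i)); rewrite /= ltnNge Mi.
Qed.

Lemma image_can {T U : Type} {h : T -> U} {h' : U -> T} (A : set T) :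
  cancel h h' -> h' @` (h @` A) = A.
Proof.
move=> hK; rewrite image_comp; apply/seteqP; split => [_ [x Ax <-]|x Ax].
  by rewrite /= hK.
by exists x => //=; rewrite hK.
Qed.

Lemma closure_minimal {T : topologicalType} {A B : set T} :
  closed B -> A `<=` B -> closure A `<=` B.
Proof. by move=> cB AB; rewrite (closure_id B).1 //; exact: closureS. Qed.

Fixpoint last_level (P : nat -> Prop) (n : nat) : nat :=
  if n is k.+1 then (if `[< P n >] then n else last_level P k) else 0.

Lemma last_levelP (P : nat -> Prop) n : P 0 -> P (last_level P n).
Proof. by move=> P0; elim: n => //= n IH; case: asboolP. Qed.

Lemma last_level_ge (P : nat -> Prop) n K : (K <= n)%N -> P K -> (K <= last_level P n)%N.
Proof.
elim: n => [|n IH]; first by rewrite leqn0 => /eqP ->.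
rewrite leq_eqVlt => /predU1P[-> PK /=|]; first by case: asboolP.
by rewrite ltnS => Kn PK /=; case: asboolP => _; [exact: leqW|exact: IH].
Qed.

Section BackAndForth.
Variable G : nat -> nat -> nat -> Prop.
Hypothesis G_anti : forall k i j, G k.+1 i j -> G k i j.
Hypothesis G0 : forall i j, G 0 i j.
Hypothesis G_forth : forall k, \forall i \near \oo, ~ bounded_nat (G k i).
Hypothesis G_back : forall k, \forall j \near \oo, ~ bounded_nat (G k ^~ j).

Let G_le {k k' i j} : (k <= k')%N -> G k' i j -> G k i j.
Proof. by move=> /subnK <-; elim: (k' - k) => // d IH /G_anti. Qed.

(* [fwd_level i] is the largest level [k <= i] at which [i] still has infinitely many
   [G k]-partners; it tends to infinity, and [zig] gives [i] a fresh partner at that level. *)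
Let fwd_level i := last_level (fun k => ~ bounded_nat (G k i)) i.
Let bwd_level j := last_level (fun k => ~ bounded_nat (G k ^~ j)) j.

Let unbounded_G0 : (forall i, ~ bounded_nat (G 0 i)) /\ forall j, ~ bounded_nat (G 0 ^~ j).
Proof.
by split=> [i|j] /(@bounded_natS setT _ (fun k _ => G0 _ _)); exact: unbounded_setT.
Qed.

Let fwd_level_grows K : \forall i \near \oo, (K <= fwd_level i)%N.
Proof.
have [N _ hN] := G_forth K; exists (maxn N K) => // i /=.
by rewrite geq_max => /andP[Ni Ki]; apply: last_level_ge Ki (hN _ Ni).
Qed.

Let bwd_level_grows K : \forall j \near \oo, (K <= bwd_level j)%N.
Proof.
have [N _ hN] := G_back K; exists (maxn N K) => // j /=.
by rewrite geq_max => /andP[Nj Kj]; apply: last_level_ge Kj (hN _ Nj).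
Qed.

Let fresh_fwd (p : seq (nat * nat)) i :
  exists2 j, G (fwd_level i) i j & j \notin unzip2 p.
Proof.
exact/unbounded_fresh/(last_levelP (fun k => ~ bounded_nat (G k i)))/unbounded_G0.1.
Qed.

Let fresh_bwd (p : seq (nat * nat)) j :
  exists2 i, G (bwd_level j) i j & i \notin unzip1 p.
Proof.
exact/unbounded_fresh/(last_levelP (fun k => ~ bounded_nat (G k ^~ j)))/unbounded_G0.2.
Qed.

Definition zig (p : seq (nat * nat)) (i : nat) :=
  if i \in unzip1 p then p else (i, projT1 (cid2 (fresh_fwd p i))) :: p.

Definition zag (p : seq (nat * nat)) (j : nat) :=
  if j \in unzip2 p then p else (projT1 (cid2 (fresh_bwd p j)), j) :: p.

Fixpoint zigzag (n : nat) : seq (nat * nat) :=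
  if n is k.+1 then zag (zig (zigzag k) k) k else [::].

Definition zigzag_inv (p : seq (nat * nat)) :=
  [/\ uniq (unzip1 p), uniq (unzip2 p) &
      forall i j, (i, j) \in p -> G (fwd_level i) i j \/ G (bwd_level j) i j].

Lemma zigzag_invP n : zigzag_inv (zigzag n).
Proof.
elim: n => [|n IH] /=; first by split.
have zig_inv p i : zigzag_inv p -> zigzag_inv (zig p i).
  rewrite /zig; case: ifPn => // ip [u1 u2 hG]; case: cid2 => j Gj jp.
  split => /=; rewrite ?ip ?jp // => a b; rewrite inE => /predU1P[[-> ->]|/hG] //.
  by left.
have zag_inv p j : zigzag_inv p -> zigzag_inv (zag p j).
  rewrite /zag; case: ifPn => // jp [u1 u2 hG]; case: cid2 => i Gi ip.
  split => /=; rewrite ?ip ?jp // => a b; rewrite inE => /predU1P[[-> ->]|/hG] //.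
  by right.
exact/zag_inv/zig_inv.
Qed.

Lemma zigzag_mono {m n} : (m <= n)%N -> {subset zigzag m <= zigzag n}.
Proof.
move=> /subnK <-; elim: (n - m) => // d IH q /IH /=.
have zigS p i : {subset p <= zig p i}.
  by rewrite /zig; case: ifP => _ x px //; rewrite inE px orbT.
have zagS p j : {subset p <= zag p j}.
  by rewrite /zag; case: ifP => _ x px //; rewrite inE px orbT.
by move=> /zigS /zagS.
Qed.

Lemma zigzag_dom i : exists j, (i, j) \in zigzag i.+1.
Proof.
have fi : i \in unzip1 (zig (zigzag i) i).
  by rewrite /zig; case: ifP => //= _; rewrite inE eqxx.
have /mapP[[a b] ab /= ia] : i \in unzip1 (zigzag i.+1).
  by rewrite /= /zag; case: ifP => // _; rewrite /= inE fi orbT.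
by rewrite -ia in ab; exists b.
Qed.

Lemma zigzag_rng j : exists i, (i, j) \in zigzag j.+1.
Proof.
have : j \in unzip2 (zigzag j.+1) by rewrite /= /zag; case: ifP => //= _; rewrite inE eqxx.
by move=> /mapP[[a b] ab /= jb]; rewrite -jb in ab; exists a.
Qed.

Let sigma i := projT1 (cid (zigzag_dom i)).
Let tau j := projT1 (cid (zigzag_rng j)).

Let zigzag_sigma {i n} : (i < n)%N -> (i, sigma i) \in zigzag n.
Proof. by move=> lt; apply: (zigzag_mono lt); exact: projT2 (cid (zigzag_dom i)). Qed.

Let zigzag_tau {j n} : (j < n)%N -> (tau j, j) \in zigzag n.
Proof. by move=> lt; apply: (zigzag_mono lt); exact: projT2 (cid (zigzag_rng j)). Qed.

Lemma back_and_forth : exists sigma tau : nat -> nat,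
  [/\ cancel sigma tau, cancel tau sigma & forall k, \forall i \near \oo, G k i (sigma i)].
Proof.
have sigmaK : cancel sigma tau.
  move=> i; pose n := (maxn i (sigma i)).+1; have [_ u2 _] := zigzag_invP n.
  have lti : (i < n)%N by rewrite ltnS leq_maxl.
  have ltj : (sigma i < n)%N by rewrite ltnS leq_maxr.
  by case: (uniq_map_in_inj u2 _ _ (zigzag_sigma lti) (zigzag_tau ltj) erefl).
have tauK : cancel tau sigma.
  move=> j; pose n := (maxn (tau j) j).+1; have [u1 _ _] := zigzag_invP n.
  have lti : (tau j < n)%N by rewrite ltnS leq_maxl.
  have ltj : (j < n)%N by rewrite ltnS leq_maxr.
  by case: (uniq_map_in_inj u1 _ _ (zigzag_sigma lti) (zigzag_tau ltj) erefl).
exists sigma, tau; split => // k.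
have [N1 _ fwd_k] := fwd_level_grows k.
have [N2 _ bwd_k] := bwd_level_grows k.
have [N3 _ sigmaN2] := cancel_eventually_ge N2 sigmaK.
exists (maxn N1 N3) => // i; rewrite /= geq_max => /andP[iN1 iN3].
have [_ _ /(_ _ _ (zigzag_sigma (ltnSn i)))] := zigzag_invP i.+1.
by case=> Gi; apply: (G_le _ Gi); [exact: fwd_k|exact/bwd_k/sigmaN2].
Qed.

End BackAndForth.

Definition glue_set {X W : topologicalType} (f : admissible X W)
    (E : set X) (K : set W) : set (awglue f) :=
  fun q => match q with inl x => E x | inr w => K w end.

Section Glueing.
Context {X W : topologicalType} {f : admissible X W}.
Local Notation Y := (awglue f).

Lemma closed_glueE (D : set Y) : closed D <-> glue_closed f D.
Proof.
by rewrite -openC; change (glue_open f (~` D) <-> glue_closed f D); rewrite /glue_open setCK.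
Qed.

Lemma closed_preimage_inl {D : set Y} : closed D -> closed (inl @^-1` D).
Proof. by case/closed_glueE. Qed.

Lemma closed_preimage_inr {D : set Y} : closed D -> closed (inr @^-1` D).
Proof. by case/closed_glueE. Qed.

Lemma adm_preimage_inl {D : set Y} : closed D -> f (inl @^-1` D) `<=` inr @^-1` D.
Proof. by case/closed_glueE. Qed.

Lemma continuous_inl : continuous (inl : X -> Y).
Proof. by apply/continuous_closedP => D /closed_preimage_inl. Qed.

Lemma continuous_inr : continuous (inr : W -> Y).
Proof. by apply/continuous_closedP => D /closed_preimage_inr. Qed.

Lemma closed_glue_set (E : set X) (K : set W) :
  closed E -> closed K -> f E `<=` K -> closed (glue_set f E K).
Proof. by move=> cE cK fEK; apply/closed_glueE. Qed.

Lemma open_glue_set (E : set X) (K : set W) :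
  open E -> open K -> f (~` E) `<=` ~` K -> open (glue_set f E K).
Proof.
move=> oE oK fEK; rewrite -closedC.
have -> : ~` glue_set f E K = glue_set f (~` E) (~` K) by apply/funext => -[].
by apply: closed_glue_set; rewrite ?closedC.
Qed.

Lemma closure_image_inl (E : set X) (w : W) :
  closed E -> closure (inl @` E : set Y) (inr w) <-> f E w.
Proof.
move=> cE; split.
  have cD : closed (glue_set f E (f E)) by apply: closed_glue_set => //; exact: adm_closed.
  have sub : inl @` E `<=` glue_set f E (f E) by move=> _ [x Ex <-].
  by move/(closure_minimal cD sub).
have cl := @closed_closure Y (inl @` E).
move=> /(adm_mono cE (closed_preimage_inl cl)) fEw; apply: (adm_preimage_inl cl).
by apply: fEw => x Ex; apply: subset_closure; exists x.
Qed.

End Glueing.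

Section GlueMap.
Context {X X' W : topologicalType} (f : admissible X W) (g : admissible X' W).

Definition glue_map (h : X -> X') (q : awglue f) : awglue g :=
  match q with inl x => inl (h x) | inr w => inr w end.

Lemma continuous_glue_map (h : X -> X') : continuous h ->
  (forall D, closed D -> f (h @^-1` D) `<=` g D) -> continuous (glue_map h).
Proof.
move=> hc fg; apply/continuous_closedP => D cD; apply/closed_glueE; split.
- exact: (continuous_closedP _).1 hc _ (closed_preimage_inl cD).
- exact: closed_preimage_inr cD.
- by move=> w /(fg _ (closed_preimage_inl cD)) /(adm_preimage_inl cD).
Qed.

End GlueMap.

Lemma glue_empty (X W : topologicalType) (f : admissible X W) :
  (X -> False) -> dense (range (inl : X -> awglue f)) -> awglue f -> False.
Proof.
move=> noX dX [x|w]; first exact: noX.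
by have [|_ [_ [x _ _]]] := dX setT _ openT; [exists (inr w)|apply: noX x].
Qed.

Lemma homeomorphic_empty (T U : topologicalType) :
  (T -> False) -> (U -> False) -> homeomorphic T U.
Proof.
move=> noT noU; exists (fun t => match noT t with end), (fun u => match noU u with end).
by split=> [t|u|t|u]; [case: (noT t)|case: (noU u)|case: (noT t)|case: (noU u)].
Qed.

Section Fibres.
(* The blank in [{ pi] keeps it apart from the [{pi _}] notation of generic_quotient. *)
Context {C X : topologicalType} { pi : X -> nat} (decomp : coprod_decomp C pi).

Definition fibre_emb (i : nat) : C -> X := projT1 (cid (decomp.2 i)).

Lemma fibre_embP i : [/\ continuous (fibre_emb i), injective (fibre_emb i),
  range (fibre_emb i) = pi @^-1` [set i] &
  forall U, open U -> open (fibre_emb i @` U)].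
Proof. exact: projT2 (cid (decomp.2 i)). Qed.

Lemma pi_fibre_emb i c : pi (fibre_emb i c) = i.
Proof.
have [_ _ re _] := fibre_embP i.
have : range (fibre_emb i) (fibre_emb i c) by exists c.
by rewrite re.
Qed.

Lemma fibre_emb_surj x : exists c, fibre_emb (pi x) c = x.
Proof.
have [_ _ re _] := fibre_embP (pi x).
have : range (fibre_emb (pi x)) x by rewrite re.
by case=> c _ cx; exists c.
Qed.

Definition fibre_coord (x : X) : C := projT1 (cid (fibre_emb_surj x)).

Lemma fibre_coordK x : fibre_emb (pi x) (fibre_coord x) = x.
Proof. exact: projT2 (cid (fibre_emb_surj x)). Qed.

Lemma fibre_coord_emb i c : fibre_coord (fibre_emb i c) = c.
Proof.
have [_ inj _ _] := fibre_embP i; apply: inj.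
by have := fibre_coordK (fibre_emb i c); rewrite pi_fibre_emb.
Qed.

Lemma open_preimage_pi (T : set nat) : open (pi @^-1` T).
Proof.
have -> : pi @^-1` T = \bigcup_(i in T) pi @^-1` [set i].
  by apply/seteqP; split => [x Tx|x [i Ti /= ->]] //; exists (pi x).
by apply: bigcup_open => i _; exact: decomp.1.
Qed.

Lemma closed_preimage_pi (T : set nat) : closed (pi @^-1` T).
Proof. by rewrite -openC preimage_setC; exact: open_preimage_pi. Qed.

End Fibres.

Lemma closure_image_fst {T U : topologicalType} (B : set (T * U)) :
  compact [set: T] -> compact [set: U] -> hausdorff_space T ->
  closure (fst @` B) `<=` fst @` closure B.
Proof.
move=> cT cU hT; have cB : compact (closure B).
  by apply: subclosed_compact (compact_setX cT cU) _; [exact: closed_closure|].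
have /(compact_closed hT) clB : compact (fst @` closure B).
  by apply: continuous_compact cB; apply: continuous_subspaceT => q; exact: cvg_fst.
apply: closure_minimal clB _ => _ [q Bq <-].
by exists q => //; exact: subset_closure.
Qed.

Definition trace {X W : topologicalType} (pi : X -> nat) (f : admissible X W)
  (T : set nat) : set W := f (pi @^-1` T).

Section Trace.
Context {C X W : topologicalType} { pi : X -> nat} {f : admissible X W}.
Hypothesis decomp : coprod_decomp C pi.
Local Notation Y := (awglue f).
Local Notation trace := (trace pi f).

Lemma closed_trace T : closed (trace T).
Proof. by apply: adm_closed; exact: closed_preimage_pi decomp _. Qed.

Lemma traceU T T' : trace (T `|` T') = trace T `|` trace T'.
Proof. by rewrite /trace preimage_setU adm_setU //; exact: closed_preimage_pi decomp _. Qed.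

Lemma le_trace {T T'} : T `<=` T' -> trace T `<=` trace T'.
Proof.
by move=> TT'; apply: (adm_mono _ _ (preimage_subset TT')); exact: closed_preimage_pi decomp _.
Qed.

Lemma trace1 i : compact [set: C] -> hausdorff_space Y -> trace [set i] = set0.
Proof.
move=> cC hY; have [ce _ re _] := fibre_embP decomp i.
have /(compact_closed hY) cF : compact (inl @` (pi @^-1` [set i]) : set Y).
  rewrite -re image_comp; apply: continuous_compact cC.
  apply: continuous_subspaceT => c.
  by apply: continuous_comp; [exact: ce|exact: continuous_inl].
rewrite -subset0 => w /(adm_mono (closed_preimage_pi decomp _) (closed_preimage_inl cF)).
by move=> /(_ (@preimage_image _ _ inl _)) /(adm_preimage_inl cF) [].
Qed.

Lemma trace_bounded {T} : compact [set: C] -> hausdorff_space Y ->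
  bounded_nat T -> trace T = set0.
Proof.
move=> cC hY [n /le_trace Tn]; rewrite -subset0; apply: subset_trans Tn _.
elim: n => [|n IH]; first by rewrite II0 /trace preimage_set0 adm_set0.
by rewrite IIS traceU trace1 // setU0.
Qed.

Lemma bounded_trace0 {T} : C -> compact [set: Y] -> trace T = set0 -> bounded_nat T.
Proof.
move=> c0 cY T0; pose K := glue_set f (pi @^-1` T) set0.
have cK : compact K.
  apply: (subclosed_compact _ cY) => //; apply: closed_glue_set.
  - exact: closed_preimage_pi decomp _.
  - exact: closed0.
  - by rewrite -[f _]/(trace T) T0.
have [||s cov] := compact_finite_subcover (fun i => glue_set f (pi @^-1` [set i]) set0) cK.
- move=> i; apply: open_glue_set; [exact: open_preimage_pi decomp _|exact: open0|].
  by move=> w _ [].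
- by move=> [x _|w []]; exists (pi x).
apply: bounded_natS (bounded_nat_seq s) => i Ti.
have Kx : K (inl (fibre_emb decomp i c0)) by rewrite /K /= pi_fibre_emb.
by have [j js /=] := cov _ Kx; rewrite pi_fibre_emb => ->.
Qed.

Lemma traceT : dense (range (inl : X -> Y)) -> trace setT = setT.
Proof.
move=> dX; apply/seteqP; split => // w _; rewrite /trace preimage_setT.
apply/(closure_image_inl _ w closedT) => B; rewrite nbhsE; case=> O [oO Ow] OB.
have [|y [Oy [x _ xy]]] := dX O _ oO; first by exists (inr w).
by exists (inl x); split; [exists x|apply: OB; rewrite xy].
Qed.

Lemma trace_image_sub (D : set X) : Pers f (eps_of pi) -> closed D ->
  trace (pi @` D) `<=` f D.
Proof.
move=> [[cY hY _] pers] cD w.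
move=> /(closure_image_inl _ w (closed_preimage_pi decomp _)) clw.
(* [rep] moves points of fibres meeting [D] into [D] inside their fibre; its graph lies over
   the diagonal of [nat], so it is perspective and its closure meets [W] only diagonally. *)
pose rep x := xget x (D `&` pi @^-1` [set pi x]).
have repP x : (pi @` D) (pi x) -> D (rep x) /\ pi (rep x) = pi x.
  by move=> [y Dy pyx]; apply: (@xgetPex _ x (D `&` _)); exists y.
pose e := [set (x, rep x) | x in pi @^-1` (pi @` D)].
have /pers pe : eps_of pi e.
  exists [set p | p.1 = p.2].
    by apply: (sub_finite_set _ (finite_set0 _)) => p [h /(_ h)].
  by move=> _ [x Dx <-] /=; rewrite (repP x Dx).2.
pose B := (fun p : X * X => ((inl p.1 : Y), (inl p.2 : Y))) @` e.
have [q Bwq] : exists q, closure B ((inr w : Y), q).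
  have : closure (fst @` B) (inr w).
    apply: closureS clw => _ [x Dx <-].
    by exists ((inl x : Y), (inl (rep x) : Y)) => //; exists (x, rep x) => //; exists x.
  by move=> /(closure_image_fst _ cY cY hY) [[q1 q] Bq /= <-]; exists q.
have [w' []] : exists w', ((inr w : Y), q) = (inr w', inr w').
  by apply: pe; split => // -[[x]].
move=> <- qw; rewrite {q}qw in Bwq.
apply/(closure_image_inl _ w cD) => N Nw.
have NN : nbhs ((inr w : Y), (inr w : Y)) (N `*` N) by exists (N, N).
have [_ [[_ [x Dx <-] <-] [_ Nx]]] := Bwq _ NN.
by exists (inl (rep x)); split => //; exists (rep x) => //; exact: (repP x Dx).1.
Qed.

End Trace.

Definition small_partition {R : realType} {Z : pseudoMetricType R}
    (A : set nat -> set Z) (e : R) (n : nat) (c : nat -> Z) (l : nat -> nat) :=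
  (forall i, (l i < n)%N) /\ forall k, A (l @^-1` [set k]) `<=` ball (c k) e.

Section SmallPartition.
Context {C X : topologicalType} {R : realType} {Z : pseudoMetricType R}.
Context (pi : X -> nat) (f : admissible X Z).
Hypothesis decomp : coprod_decomp C pi.
Local Notation Y := (awglue f).

Lemma inr_closure_ball (z : Z) (e : R) : (0 < e)%R -> hausdorff_compactification f ->
  exists O : set Y, open_nbhs (inr z : Y) O /\ inr @^-1` closure O `<=` ball z e.
Proof.
move=> e0 [cY hY _]; pose U := glue_set f setT (ball z e)°.
have oU : open U.
  apply: open_glue_set; [exact: openT|exact: open_interior|].
  by rewrite setCT adm_set0.
have Uz : nbhs (inr z : Y) U by apply: open_nbhs_nbhs; split => //; exact: nbhsx_ballx.
have [V Vz clVU] := compact_regular hY cY (@filterT _ _ _) Uz.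
exists V°; split; first by split; [exact: open_interior|exact: Vz].
move=> w /(closureS (@interior_subset _ V)) /clVU; exact: interior_subset.
Qed.

Definition hits {I : Type} (O : I -> set Y) (i : nat) (j : I) : bool :=
  `[< exists x, pi x = i /\ O j (inl x) >].

(* Fibres meeting no member of [s] get the colour [size s]; that colour has empty trace. *)
Definition first_hit {I : Type} (s : seq I) (O : I -> set Y) (i : nat) : nat :=
  find (hits O i) s.

Lemma trace_first_hit {I : eqType} (s : seq I) (O : I -> set Y) (j0 : I) (k : nat) :
  Pers f (eps_of pi) -> (forall j, open (O j)) ->
  (forall w, exists2 j, j \in s & O j (inr w)) ->
  trace pi f (first_hit s O @^-1` [set k]) `<=` inr @^-1` closure (O (nth j0 s k)).
Proof.
move=> pers oO cov; have [ks|sk] := ltnP k (size s).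
  have cl := @closed_closure Y (O (nth j0 s k)).
  pose Dk := pi @^-1` (first_hit s O @^-1` [set k]) `&` inl @^-1` closure (O (nth j0 s k)).
  have cDk : closed Dk.
    by apply: closedI; [exact: closed_preimage_pi decomp _|exact: closed_preimage_inl].
  have : first_hit s O @^-1` [set k] `<=` pi @` Dk.
    move=> i /= hik; have hs : has (hits O i) s by rewrite has_find [find _ _]hik.
    have /asboolP[x [pxi Ox]] := nth_find j0 hs; rewrite [find _ _]hik in Ox.
    by exists x => //; split; [rewrite /= pxi|exact: subset_closure].
  move=> /(le_trace decomp) sub w /sub /(trace_image_sub decomp _ pers cDk).
  move=> /(adm_mono cDk (closed_preimage_inl cl) (fun _ => @proj2 _ _)).
  exact: adm_preimage_inl.
move=> w /(closure_image_inl _ w (closed_preimage_pi decomp _)) clw; exfalso.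
have [j js Ojw] := cov w.
have [_ [[x /= hitx <-] Ojx]] := clw _ (open_nbhs_nbhs (conj (oO j) Ojw)).
have : has (hits O (pi x)) s by apply/hasP; exists j => //; apply/asboolP; exists x.
by rewrite has_find [find _ _]hitx ltnNge sk.
Qed.

Lemma trace_small_partition (w0 : Z) (e : R) : (0 < e)%R -> compact [set: Z] ->
  Pers f (eps_of pi) -> exists n c l, small_partition (trace pi f) e n c l.
Proof.
move=> e0 cZ pers.
have [U UP] := choice (fun z => inr_closure_ball z e e0 pers.1).
have [||s cov] := compact_finite_subcover (fun z => inr @^-1` U z) cZ.
- by move=> z; apply: (continuousP _).1 continuous_inr _ (UP z).1.1.
- by move=> z _; exists z => //; exact: (UP z).1.2.
exists (size s).+1, (nth w0 s), (first_hit s U); split => [i|k].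
  by rewrite ltnS find_size.
apply: subset_trans (UP _).2; apply: trace_first_hit pers (fun z => (UP z).1.1) _.
by move=> w; have [z zs Uzw] := cov w I; exists z.
Qed.

End SmallPartition.

Section TraceAxioms.
Context {R : realType} {Z : pseudoMetricType R}.

Record trace_axioms (A : set nat -> set Z) : Prop := TraceAxioms {
  tr_closed : forall T, closed (A T);
  trU : forall T T', A (T `|` T') = A T `|` A T';
  tr_eq0 : forall T, A T = set0 <-> bounded_nat T;
  trT : A setT = setT;
  tr_partition : forall e : R, (0 < e)%R -> exists n c l, small_partition A e n c l }.

Arguments tr_closed {A}.
Arguments trU {A}.
Arguments tr_eq0 {A}.
Arguments trT {A}.
Arguments tr_partition {A}.

Definition mesh (K : nat) : R := K.+1%:R^-1.

Definition cell (L : nat -> nat -> nat) (k i : nat) : set nat :=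
  [set i' | forall K, (K < k)%N -> L K i' = L K i].

Section OneTrace.
Context {A : set nat -> set Z}.
Hypothesis hA : trace_axioms A.

Lemma le_tr {T T'} : T `<=` T' -> A T `<=` A T'.
Proof. by move=> TT'; rewrite -(setUidr TT') (trU hA); exact: subsetUl. Qed.

Lemma tr_unbounded {T w} : A T w -> ~ bounded_nat T.
Proof. by move=> ATw /(tr_eq0 hA) AT0; rewrite AT0 in ATw. Qed.

Lemma tr_nonempty {T w} : A T w -> exists i, T i.
Proof.
move=> /tr_unbounded Tunb; apply: contrapT => T0; apply: Tunb.
by exists 0 => i Ti; case: T0; exists i.
Qed.

Lemma tr_tail (b : nat) {T w} : A T w -> A (T `&` [set i | (b <= i)%N]) w.
Proof.
have TbI : T `<=` (T `&` [set i | (b <= i)%N]) `|` `I_b.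
  by move=> i Ti; case: (leqP b i) => bi; [left|right].
move=> /(le_tr TbI); rewrite (trU hA) [A `I_b](proj2 (tr_eq0 hA _)) ?setU0 //.
by exists b.
Qed.

Lemma tr_pigeonhole {l : nat -> nat} {n : nat} {T w} : (forall i, (l i < n)%N) ->
  A T w -> exists k, A (T `&` l @^-1` [set k]) w.
Proof.
move=> ln; rewrite -[X in A X w -> _](@setIidl _ _ [set i | (l i < n)%N]); last first.
  by move=> i _; exact: ln.
elim: n {ln} => [|m IH].
  rewrite (_ : _ `&` _ = set0) ?(proj2 (tr_eq0 hA _)) //; first by exists 0.
  by apply/seteqP; split => // i [].
have -> : T `&` [set i | (l i < m.+1)%N] =
    (T `&` [set i | (l i < m)%N]) `|` (T `&` l @^-1` [set m]).
  apply/seteqP; split => [i [Ti]|i [[Ti lim]|[Ti lim]]] /=.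
  - by rewrite ltnS leq_eqVlt => /predU1P[lim|lim]; [right|left].
  - by split => //; exact: ltnW.
  - by split => //; rewrite lim.
by rewrite (trU hA) => -[/IH|Am] //; exists m.
Qed.

Lemma tr_levels : exists n c L,
  forall K, small_partition A (mesh K) (n K) (c K) (L K : nat -> nat).
Proof.
have /choice[p hp] K : exists p : nat * (nat -> Z) * (nat -> nat),
    small_partition A (mesh K) p.1.1 p.1.2 p.2.
  by have [|n [c [l ?]]] := tr_partition hA (mesh K); [rewrite invr_gt0|exists (n, c, l)].
by exists (fun K => (p K).1.1), (fun K => (p K).1.2), (fun K => (p K).2).
Qed.

Section Cells.
Context {n : nat -> nat} {c : nat -> nat -> Z} {L : nat -> nat -> nat}.
Hypothesis hL : forall K, small_partition A (mesh K) (n K) (c K) (L K).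

Lemma tr_cell (k : nat) {S w} : A S w -> exists2 i, S i & A (S `&` cell L k i) w.
Proof.
move=> ASw; elim: k => [|k [i Si ASi]].
  have [i Si] := tr_nonempty ASw; exists i => //.
  by rewrite (_ : _ `&` _ = S) //; apply/setIidl.
have [m ASm] := tr_pigeonhole (hL k).1 ASi.
have [i' [[Si' celli'] Li']] := tr_nonempty ASm.
exists i' => //; apply: le_tr ASm => j [[Sj cellj] Lj]; split => // K.
by rewrite ltnS leq_eqVlt => /predU1P[->|Kk]; [rewrite Lj Li'|rewrite cellj // celli'].
Qed.

Lemma cell_ball {K k i w} : (K < k)%N -> A (cell L k i) w -> ball (c K (L K i)) (mesh K) w.
Proof. by move=> Kk Aw; apply: (hL K).2 (le_tr _ _ Aw) => j /(_ K Kk). Qed.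

End Cells.
End OneTrace.

Definition close (c c' : nat -> nat -> Z) (L L' : nat -> nat -> nat) (k i j : nat) :=
  forall K, (K < k)%N -> ball (c K (L K i)) (mesh K + mesh K)%R (c' K (L' K j)).

Lemma close_sym c c' L L' k i j : close c c' L L' k i j -> close c' c L' L k j i.
Proof. by move=> cl K Kk; apply/ball_sym/cl. Qed.

Section TwoTraces.
Context {A A' : set nat -> set Z} (hA : trace_axioms A) (hA' : trace_axioms A').
Context {n n' : nat -> nat} {c c' : nat -> nat -> Z} {L L' : nat -> nat -> nat}.
Hypothesis hL : forall K, small_partition A (mesh K) (n K) (c K) (L K).
Hypothesis hL' : forall K, small_partition A' (mesh K) (n' K) (c' K) (L' K).

Lemma close_forth k : \forall i \near \oo, ~ bounded_nat (close c c' L L' k i).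
Proof.
pose E := [set i | A (cell L k i) = set0].
have [N EN] : bounded_nat E.
  apply/(tr_eq0 hA)/seteqP; split => // w /(tr_cell hA hL k) [i Ei].
  by move/(le_tr hA (@subIsetr _ _ _)); rewrite Ei.
exists N => // i /= Ni; have [w Aw] : exists w, A (cell L k i) w.
  apply: contrapT => nw; suff /EN : E i by rewrite /= ltnNge Ni.
  by apply/seteqP; split => // w' ?; apply: nw; exists w'.
have [|j _ A'w] := tr_cell hA' hL' k (_ : A' setT w); first by rewrite (trT hA').
move=> /(@bounded_natS (setT `&` cell L' k j)) bd; apply: (tr_unbounded hA' A'w).
apply: bd => j' [_ cellj'] K Kk.
have /(cell_ball hA' hL' Kk) := le_tr hA' (@subIsetr _ _ _) _ A'w.
by rewrite -cellj' // => /ball_sym; apply: ball_triangle (cell_ball hA hL Kk Aw).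
Qed.

Lemma tr_sub_image {sigma tau : nat -> nat} : cancel sigma tau ->
  (forall k, \forall i \near \oo, close c c' L L' k i (sigma i)) ->
  forall T, A T `<=` A' (sigma @` T).
Proof.
move=> sK hclose T w ATw; rewrite ((closure_id _).1 (tr_closed hA' _)).
move=> B /nbhs_ballP[e /= e0 eB].
have [K meshK] : exists K, (mesh K < e / 4)%R.
  by have [|K] := @ltr_add_invr _ 0%R (e / 4)%R; [rewrite divr_gt0|rewrite add0r; exists K].
have [b _ closeb] := hclose K.+1.
have [m ATm] := tr_pigeonhole hA (hL K).1 (tr_tail hA b ATw).
set T2 := _ `&` _ in ATm.
have wm : ball (c K m) (mesh K) w by apply: (hL K).2 (le_tr hA (@subIsetr _ _ _) _ ATm).
have [u A'u] : exists u, A' (sigma @` T2) u.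
  apply: contrapT => nu; apply: (tr_unbounded hA ATm); rewrite -(image_can T2 sK).
  apply/bounded_nat_image/(tr_eq0 hA')/seteqP; split => // u A'u; apply: nu; exists u.
  exact: A'u.
have [m' A'm'] := tr_pigeonhole hA' (hL' K).1 A'u.
have um' : ball (c' K m') (mesh K) u.
  by apply: (hL' K).2 (le_tr hA' (@subIsetr _ _ _) _ A'm').
have [_ [[i [[Ti bi] Lim] <-] L'im']] := tr_nonempty hA' A'm'.
have := closeb i bi K (ltnSn K); rewrite /= Lim L'im' => mm'.
exists u; split.
  have /(le_tr hA') : sigma @` T2 `<=` sigma @` T by move=> _ [j [[Tj _] _] <-]; exists j.
  exact.
apply: eB; apply: (le_ball (e1 := (mesh K + ((mesh K + mesh K) + mesh K))%R)).
  by move: (mesh K) meshK => x; lra.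
exact: ball_triangle (ball_sym wm) (ball_triangle mm' um').
Qed.

End TwoTraces.

Lemma trace_perm {A A' : set nat -> set Z} : trace_axioms A -> trace_axioms A' ->
  exists sigma tau : nat -> nat,
    [/\ cancel sigma tau, cancel tau sigma & forall T, A T = A' (sigma @` T)].
Proof.
move=> hA hA'; have [n [c [L hL]]] := tr_levels hA.
have [n' [c' [L' hL']]] := tr_levels hA'.
have [||||sigma [tau [sK tK close_sigma]]] := back_and_forth (close c c' L L').
- by move=> k i j cl K Kk; apply/cl/ltnW.
- by [].
- exact: (close_forth hA hA' hL hL').
- move=> k; have [N _ hN] := close_forth hA' hA hL' hL k; exists N => // j /hN.
  by apply: contra_not; apply: bounded_natS => i /close_sym.
have close_tau k : \forall j \near \oo, close c' c L' L k j (tau j).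
  have [N _ hN] := close_sigma k; have [M _ hM] := cancel_eventually_ge N tK.
  by exists M => // j /hM /hN; rewrite /= tK => /close_sym.
exists sigma, tau; split => // T; apply/seteqP; split.
  exact: (tr_sub_image hA hA' hL hL' sK close_sigma).
rewrite -[S in _ `<=` A S](image_can T sK).
exact: (tr_sub_image hA' hA hL' hL tK close_tau).
Qed.

End TraceAxioms.

Lemma trace_axioms_glue {C X : topologicalType} {R : realType} {Z : pseudoMetricType R}
    { pi : X -> nat} (f : admissible X Z) :
  C -> coprod_decomp C pi -> compact [set: C] -> compact [set: Z] ->
  Pers f (eps_of pi) -> trace_axioms (trace pi f).
Proof.
move=> c0 decomp cC cZ pers; have [[cY hY dX] _] := pers.
have eq0 T : trace pi f T = set0 <-> bounded_nat T.
  by split; [exact: (bounded_trace0 decomp c0 cY)|exact: (trace_bounded decomp cC hY)].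
split.
- exact: (closed_trace decomp).
- exact: (traceU decomp).
- exact: eq0.
- exact: (traceT dX).
move=> e e0; have [w0 _] : exists w0 : Z, True.
  apply: contrapT => noZ; apply: unbounded_setT; apply/eq0/seteqP; split => // w.
  by case: noZ; exists w.
exact: (trace_small_partition _ _ decomp w0 e e0 cZ pers).
Qed.

Section Relabel.
Context {C X : topologicalType} { pi pi' : X -> nat}.
Variables (decomp : coprod_decomp C pi) (decomp' : coprod_decomp C pi').

Definition relabel (sigma : nat -> nat) (x : X) : X :=
  fibre_emb decomp' (sigma (pi x)) (fibre_coord decomp x).

Lemma pi_relabel sigma x : pi' (relabel sigma x) = sigma (pi x).
Proof. exact: pi_fibre_emb. Qed.

Lemma continuous_relabel sigma : continuous (relabel sigma).
Proof.
apply/continuousP => U oU.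
have -> : relabel sigma @^-1` U =
    \bigcup_i fibre_emb decomp i @` (fibre_emb decomp' (sigma i) @^-1` U).
  apply/seteqP; split => [x Ux|x [i _ [c Uc <-]]].
    by exists (pi x) => //; exists (fibre_coord decomp x); rewrite ?fibre_coordK.
  by rewrite /relabel /= pi_fibre_emb fibre_coord_emb.
apply: bigcup_open => i _; have [_ _ _ open_emb] := fibre_embP decomp i; apply: open_emb.
by have [ce _ _ _] := fibre_embP decomp' (sigma i); exact: (continuousP _).1 ce _ oU.
Qed.

Lemma adm_preimage_relabel {W : topologicalType} (f g : admissible X W) sigma :
  Pers g (eps_of pi') -> (forall T, trace pi f T `<=` trace pi' g (sigma @` T)) ->
  forall D, closed D -> f (relabel sigma @^-1` D) `<=` g D.
Proof.
move=> pers fg D cD; set E := relabel sigma @^-1` D.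
have cE : closed E := (continuous_closedP _).1 (continuous_relabel sigma) _ cD.
have sub : sigma @` (pi @` E) `<=` pi' @` D.
  by move=> _ [_ [x Ex <-] <-]; exists (relabel sigma x) => //; exact: pi_relabel.
apply: subset_trans (trace_image_sub decomp' D pers cD).
apply: subset_trans (le_trace decomp' sub); apply: subset_trans (fg _).
exact: (adm_mono cE (closed_preimage_pi decomp _) (@preimage_image _ _ pi E)).
Qed.

End Relabel.

Lemma relabelK {C X : topologicalType} { pi pi' : X -> nat}
    (decomp : coprod_decomp C pi) (decomp' : coprod_decomp C pi') (sigma tau : nat -> nat) :
  cancel sigma tau -> cancel (relabel decomp decomp' sigma) (relabel decomp' decomp tau).
Proof.
by move=> sK x; rewrite /relabel pi_relabel sK fibre_coord_emb fibre_coordK.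
Qed.

Theorem mainTheorem7 (C X : topologicalType) (R : realType)
  (Z : pseudoMetricType R) (pi pi' : X -> nat) (f g : admissible X Z) :
  compact [set: C] -> hausdorff_space C ->
  coprod_decomp C pi -> coprod_decomp C pi' ->
  compact [set: Z] -> hausdorff_space Z ->
  Pers f (eps_of pi) -> Pers g (eps_of pi') ->
  homeomorphic (awglue f) (awglue g).
Proof.
move=> cC _ decomp decomp' cZ _ pf pg.
have [[c0 _]|noC] := pselect (exists c : C, True); last first.
  have noX (x : X) : False by apply: noC; exists (fibre_coord decomp x).
  by apply: homeomorphic_empty; apply: glue_empty noX _; [case: pf => -[]|case: pg => -[]].
have [sigma [tau [sK tK trE]]] := trace_perm (trace_axioms_glue f c0 decomp cC cZ pf)
  (trace_axioms_glue g c0 decomp' cC cZ pg).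
exists (glue_map f g (relabel decomp decomp' sigma)).
exists (glue_map g f (relabel decomp' decomp tau)).
split=> [[x|w]|[x|w]||] //=; rewrite ?relabelK //; apply: continuous_glue_map.
- exact: continuous_relabel.
- by apply: adm_preimage_relabel pg _ => T; rewrite trE.
- exact: continuous_relabel.
- by apply: adm_preimage_relabel pf _ => T; rewrite trE image_can.
Qed.
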